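(* Let $m\ge n$, let $\mathcal{U}$ be an open interval in $\mathbb{R}$, and let $F:\mathcal{U}\rightarrow M_{m\times n}(\mathbb{C})$ be a function each of whose entries is an analytic function on $\mathcal{U}$. Let $\mathcal{Y}(\mathcal{U})=\{x\in\mathcal{U} : F(x)\text{ has repeated singular values}\}$. Then either $\mathcal{Y}(\mathcal{U})=\mathcal{U}$ or $\mathcal{Y}(\mathcal{U})$ has no limit points in $\mathcal{U}$.
   Context: $M_{m\times n}(\mathbb{C})$ denotes the set of $m\times n$ complex matrices; throughout $m\ge n$. The singular values of $A\in M_{m\times n}(\mathbb{C})$ are the $n$ nonnegative square roots of the eigenvalues of $A^{\ast}A$, counted with multiplicity; $A$ has repeated singular values if two of these $n$ values coincide. A function on an open interval is analytic if around each point it is given by a convergent power series in the real variable (complex coefficients allowed). *)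

From HB Require Import structures.
From mathcomp Require Import all_boot all_order all_algebra.
From mathcomp Require Import all_classical all_reals all_analysis.
From mathcomp Require Import complex.
Set Implicit Arguments. Unset Strict Implicit. Unset Printing Implicit Defensive.
Import Order.TTheory GRing.Theory Num.Theory ComplexField.
Import numFieldNormedType.Exports.
Local Open Scope classical_set_scope.
Local Open Scope ring_scope.

Definition adjmx (R : rcfType) m n (A : 'M[R[i]]_(m, n)) : 'M[R[i]]_(n, m) :=
  (map_mx Num.conj A)^T.

(* A has repeated singular values: the n singular values of A are the
   nonnegative square roots of the eigenvalues of A^* A counted with
   (algebraic) multiplicity, i.e. of the roots s (with multiplicity) of the
   characteristic polynomial of A^* A; two of these coincide. *)
Definition repeated_singular_values (R : rcfType) m n (A : 'M[R[i]]_(m, n)) :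
  Prop :=
  exists s : seq R[i],
    char_poly (adjmx A *m A) = \prod_(z <- s) ('X - z%:P) /\
    ~~ uniq [seq sqrtC z | z <- s].

Definition analytic_on (R : realType) (U : set R) (f : R -> R[i]) : Prop :=
  forall x0, U x0 ->
    exists (a : nat -> R[i]) (r : R), 0 < r /\
      forall x, `|x - x0| < r ->
        (fun N : nat => ComplexField.Normc.normc (f x - \sum_(k < N) a k * ((x - x0)%:C)%C ^+ k))
          @ \oo --> (0 : R).

From HB Require Import structures.
From mathcomp Require Import all_boot all_order all_algebra.
From mathcomp Require Import all_classical all_reals all_analysis.
From mathcomp Require Import complex.
From mathcomp Require Import ring lra zify.
Set Implicit Arguments. Unset Strict Implicit. Unset Printing Implicit Defensive.
Import Order.TTheory GRing.Theory Num.Theory ComplexField.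
Import numFieldNormedType.Exports.
Local Open Scope classical_set_scope.
Local Open Scope ring_scope.

(* The singular values of A are the square roots of the eigenvalues of A^* A and
   the square root is injective on C, so A has repeated singular values exactly
   when the characteristic polynomial p of A^* A has a multiple root, i.e. when
   the resultant of p and p' vanishes.  This resultant is a polynomial in the
   entries of F(x)^* F(x), so x |-> |res(p_x, p_x')|^2 is a real-analytic function
   g on U, and Y is its zero set.  By the identity theorem for real-analytic
   functions on the interval U, either g vanishes on U or its zeros do not
   accumulate in U. *)

Lemma nonuniq_mem_rem (T : eqType) (s : seq T) : ~~ uniq s ->
  exists2 z, z \in s & z \in rem z s.
Proof.
elim: s => [//|a s IH] /=; rewrite negb_and negbK => /orP[a_s|/IH[z zs zr]].
  by exists a; rewrite ?mem_head //= eqxx.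
exists z; first by rewrite in_cons zs orbT.
by rewrite /=; case: eqP => // _; rewrite in_cons zr orbT.
Qed.

Lemma root_deriv_mulXsubC (F : comNzRingType) (z : F) (q : {poly F}) :
  root (('X - z%:P) * q)^`() z = root q z.
Proof. by rewrite derivM derivXsubC mul1r /root !hornerE subrr mul0r addr0. Qed.

Lemma resultant_deriv_eq0P (F : closedFieldType) (p : {poly F}) : p \is monic ->
  (exists s, p = \prod_(z <- s) ('X - z%:P) /\ ~~ uniq s) <-> resultant p p^`() = 0.
Proof.
move=> p_monic; have p0 : p != 0 by apply: monic_neq0.
split=> [[s [ps /nonuniq_mem_rem[z zs zr]]]|/eqP].
  have p_z : root p z by rewrite ps root_prod_XsubC.
  have p'_z : root p^`() z.
    by rewrite ps (big_rem z) //= root_deriv_mulXsubC (big_rem z) //= rootM root_XsubC eqxx.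
  apply/eqP; rewrite resultant_eq0; apply: (@root_size_gt1 _ z).
    by rewrite gcdp_eq0 negb_and p0.
  by rewrite root_gcd p_z p'_z.
rewrite resultant_eq0 => gcd_gt1.
have [z /[!root_gcd]/andP[p_z p'_z]] : exists z, root (gcdp p p^`()) z.
  by apply/closed_rootP; rewrite neq_ltn gcd_gt1 orbT.
have [s ps] := closed_field_poly_normal p.
rewrite (monicP p_monic) scale1r in ps.
exists s; split=> //; apply/negP => s_uniq.
have zs : z \in s by rewrite -root_prod_XsubC -ps.
move: p'_z; rewrite ps (big_rem z) //= root_deriv_mulXsubC root_prod_XsubC.
by rewrite mem_rem_uniqF.
Qed.

Lemma repeated_singular_valuesE (R : rcfType) m n (A : 'M[R[i]]_(m, n)) :
  repeated_singular_values A <->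
  resultant (char_poly (adjmx A *m A)) (char_poly (adjmx A *m A))^`() = 0.
Proof.
apply: iff_trans (resultant_deriv_eq0P (char_poly_monic _)).
by split=> -[s [ps us]]; exists s; rewrite (map_inj_uniq (@sqrtC_inj _)) in us *.
Qed.

Lemma size_deriv_monic (F : numDomainType) (p : {poly F}) : p \is monic ->
  size p^`() = (size p).-1.
Proof.
move=> p_monic; have p0 := monic_neq0 p_monic; have := lt_size_deriv p0.
case sp: (size p) => [|[|k]]; first by move/eqP: sp; rewrite size_poly_eq0 (negbTE p0).
  by rewrite ltnS leqn0 => /eqP.
rewrite ltnS => sp'; apply/eqP; rewrite eqn_leq sp' /=.
have : p^`()`_k != 0.
  have lead1 : p`_k.+1 = 1 by have := monicP p_monic; rewrite lead_coefE sp.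
  by rewrite coef_deriv lead1 pnatr_eq0.
by apply: contraNT; rewrite -leqNgt => /(nth_default 0) ->.
Qed.

Section PointwiseRingClosed.
Variables (T : Type) (V : comNzRingType) (P : (T -> V) -> Prop).
Hypotheses (PD : forall f g, P f -> P g -> P (fun x => f x + g x))
           (PM : forall f g, P f -> P g -> P (fun x => f x * g x))
           (P_cst : forall v, P (fun=> v)).

Lemma sum_closed (I : Type) (r : seq I) (Q : pred I) (F : I -> T -> V) :
  (forall i, P (F i)) -> P (fun x => \sum_(i <- r | Q i) F i x).
Proof.
move=> PF; elim: r => [|i r IH].
  by under eq_fun do rewrite big_nil; exact: P_cst.
under eq_fun do rewrite big_cons.
by case: (Q i) => //; exact: PD.
Qed.

Lemma prod_closed (I : Type) (r : seq I) (Q : pred I) (F : I -> T -> V) :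
  (forall i, P (F i)) -> P (fun x => \prod_(i <- r | Q i) F i x).
Proof.
move=> PF; elim: r => [|i r IH].
  by under eq_fun do rewrite big_nil; exact: P_cst.
under eq_fun do rewrite big_cons.
by case: (Q i) => //; exact: PM.
Qed.

Lemma det_closed n (A : T -> 'M[V]_n) :
  (forall i j, P (fun x => A x i j)) -> P (fun x => \det (A x)).
Proof.
move=> PA; apply: sum_closed => s; apply: PM => //.
by apply: prod_closed => i; exact: PA.
Qed.

Lemma natmul_closed f k : P f -> P (fun x => f x *+ k).
Proof. by move=> Pf; under eq_fun do rewrite -mulr_natr; exact: PM. Qed.

End PointwiseRingClosed.

Section PowerSeries.
Variable R : realType.
Implicit Types (c d : nat -> R) (f g : R -> R) (t : R).

Definition real_analytic_at x0 g :=
  exists c (r : R), 0 < r /\ forall t, `|t| < r -> pseries c t @ \oo --> g (x0 + t).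

Lemma pseriesE c t N : pseries c t N = \sum_(0 <= k < N) c k * t ^+ k.
Proof. by []. Qed.

Lemma pseries_coef_bounded c r rho : 0 < rho -> rho < r ->
  (forall t, `|t| < r -> cvgn (pseries c t)) ->
  exists M, forall k, `|c k| * rho ^+ k <= M.
Proof.
move=> rho0 rho_r cvg_c.
have /cvg_series_bounded/pinfty_ex_gt0[M _ cM] : cvgn (pseries c rho).
  by apply: cvg_c; rewrite ger0_norm ?(ltW rho0).
by exists M => k; move: (cM k I); rewrite /= normrM normrX (ger0_norm (ltW rho0)).
Qed.

Lemma pseriesSr c t N : pseries c t N.+1 = pseries c t N + c N * t ^+ N.
Proof. exact: seriesSr. Qed.

Lemma coef_bound_ge0 c rho M : (forall k, `|c k| * rho ^+ k <= M) -> 0 <= M.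
Proof. by move=> /(_ 0%N); apply: le_trans; rewrite expr0 mulr1. Qed.

Lemma pseries_term_le c rho M t k : 0 < rho ->
  (forall k, `|c k| * rho ^+ k <= M) -> `|c k * t ^+ k| <= M * (`|t| / rho) ^+ k.
Proof.
move=> rho0 cM; rewrite normrM normrX expr_div_n mulrA ler_pdivlMr ?exprn_gt0 //.
by rewrite mulrAC ler_wpM2r ?exprn_ge0.
Qed.

Lemma cvg0_le_norm (u e : nat -> R) : (forall n, `|u n| <= e n) ->
  e @ \oo --> 0 -> u @ \oo --> 0.
Proof.
move=> ue e0; apply: (squeeze_cvgr (f := - e) (h := e) _ _ e0).
  by apply: nearW => n; rewrite /= -ler_norml.
by rewrite -oppr0; exact: cvgN.
Qed.

Lemma real_analytic_at_cst x0 v : real_analytic_at x0 (fun=> v).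
Proof.
exists (fun k => if k is 0 then v else 0), 1; split=> // t _.
rewrite -cvg_shiftS /=; apply: cvg_near_cst; apply: nearW => N.
by rewrite pseriesE big_nat_recl // expr0 mulr1 big1 ?addr0 // => k _; rewrite mul0r.
Qed.

Lemma real_analytic_atD x0 f g : real_analytic_at x0 f -> real_analytic_at x0 g ->
  real_analytic_at x0 (fun x => f x + g x).
Proof.
move=> [c [r [r0 cf]]] [d [s [s0 dg]]].
exists (fun k => c k + d k), (Num.min r s); split=> [|t]; first by rewrite lt_min r0 s0.
rewrite lt_min => /andP[tr ts].
have -> : pseries (fun k => c k + d k) t = pseries c t \+ pseries d t.
  by apply/funext => N; rewrite /= !pseriesE -big_split; apply: eq_bigr => k _; rewrite mulrDl.
exact: cvgD (cf t tr) (dg t ts).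
Qed.

Definition cauchy_prod c d k := \sum_(0 <= i < k.+1) c i * d (k - i)%N.

Lemma pseries_cauchy_prod c d t K :
  pseries (cauchy_prod c d) t K = \sum_(0 <= i < K) c i * t ^+ i * pseries d t (K - i)%N.
Proof.
elim: K => [|K IH]; first by rewrite pseriesE !big_geq.
have -> : \sum_(0 <= i < K.+1) c i * t ^+ i * pseries d t (K.+1 - i)%N =
    \sum_(0 <= i < K.+1) (c i * t ^+ i * pseries d t (K - i)%N + c i * d (K - i)%N * t ^+ K).
  apply: eq_big_nat => i /andP[_]; rewrite ltnS => iK.
  rewrite subSn // pseriesSr mulrDr -[in t ^+ K](subnKC iK) exprD; congr (_ + _); ring.
rewrite pseriesSr IH big_split /= [in X in _ = X + _]big_nat_recr //= subnn.
have -> : pseries d t 0 = 0 by rewrite pseriesE big_geq.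
by rewrite mulr0 addr0 /cauchy_prod big_distrl.
Qed.

Lemma pseries_sub_le d rho N t m K : 0 < rho -> `|t| <= rho ->
  (forall k, `|d k| * rho ^+ k <= N) -> (m <= K)%N ->
  `|pseries d t K - pseries d t m| <= (N * (`|t| / rho) ^+ m) *+ (K - m)%N.
Proof.
move=> rho0 t_rho dN mK; rewrite /pseries sub_series_geq // -sumr_const_nat.
apply: le_trans (ler_norm_sum _ _ _) _; apply: ler_sum_nat => k /andP[mk _] /=.
apply: le_trans (pseries_term_le t k rho0 dN) _.
rewrite ler_wpM2l ?(coef_bound_ge0 dN) //.
apply: ler_wiXn2l => //; first by rewrite divr_ge0 // ltW.
by rewrite ler_pdivrMr // mul1r.
Qed.

Lemma sqrn_le_exp2 K : (K * K <= 4 * 2 ^ K)%N.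
Proof.
elim: K => [//|K IH]; rewrite expnS; have [|] := leqP K 2; last by nia.
by case: K IH => [|[|[|]]].
Qed.

Lemma pseries_cauchy_prod_sub_le c d rho M N t K : 0 < rho -> `|t| <= rho ->
  (forall k, `|c k| * rho ^+ k <= M) -> (forall k, `|d k| * rho ^+ k <= N) ->
  `|pseries c t K * pseries d t K - pseries (cauchy_prod c d) t K| <=
    4 * (M * N) * (2 * (`|t| / rho)) ^+ K.
Proof.
move=> rho0 t_rho cM dN.
have M0 := coef_bound_ge0 cM; have N0 := coef_bound_ge0 dN.
set q := `|t| / rho; have q0 : 0 <= q by rewrite divr_ge0 // ltW.
rewrite pseries_cauchy_prod [pseries c t K]pseriesE big_distrl /= -sumrB.
apply: le_trans (ler_norm_sum _ _ _) _.
(* each of the K terms is at most K M N q^K, and K^2 <= 4 2^K *)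
apply: (@le_trans _ _ (\sum_(0 <= i < K) (M * N * q ^+ K) *+ K)).
  apply: ler_sum_nat => i /andP[_ iK]; rewrite -mulrBr normrM.
  apply: le_trans (ler_pM (normr_ge0 _) (normr_ge0 _) (pseries_term_le t i rho0 cM)
     (pseries_sub_le rho0 t_rho dN (leq_subr i K))) _.
  rewrite subKn ?(ltnW iK) // mulrnAr -/q.
  have -> : M * q ^+ i * (N * q ^+ (K - i)%N) = M * N * q ^+ K.
    by rewrite -[in q ^+ K](subnKC (ltnW iK)) exprD; ring.
  by rewrite ler_wpMn2l ?mulr_ge0 ?exprn_ge0 // ltnW.
rewrite sumr_const_nat subn0 -mulrnA -[_ *+ (K * K)]mulr_natr [(2 * q) ^+ K]exprMn.
have -> : 4 * (M * N) * (2 ^+ K * q ^+ K) = M * N * q ^+ K * (4 * 2 ^+ K) by ring.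
rewrite ler_wpM2l ?mulr_ge0 ?exprn_ge0 //.
by rewrite -natrX -(natrM R 4) ler_nat sqrn_le_exp2.
Qed.

Lemma cvg_pseries_cauchy_prod c d rho M N t (u v : R) : 0 < rho -> 2 * `|t| < rho ->
  (forall k, `|c k| * rho ^+ k <= M) -> (forall k, `|d k| * rho ^+ k <= N) ->
  pseries c t @ \oo --> u -> pseries d t @ \oo --> v ->
  pseries (cauchy_prod c d) t @ \oo --> u * v.
Proof.
move=> rho0 t_rho cM dN cu dv.
have q1 : `|2 * (`|t| / rho)| < 1.
  rewrite ger0_norm; last by rewrite mulr_ge0 // divr_ge0 // ltW.
  by rewrite mulrA ltr_pdivrMr // mul1r.
apply: (cvg_sub0 _ (cvgM cu dv)); apply: cvg0_le_norm.
  move=> K; rewrite distrC.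
  by apply: pseries_cauchy_prod_sub_le rho0 _ cM dN; have := normr_ge0 t; lra.
by rewrite -(mulr0 (4 * (M * N))); apply: cvgM; [exact: cvg_cst | exact: cvg_expr].
Qed.

Lemma real_analytic_atM x0 f g : real_analytic_at x0 f -> real_analytic_at x0 g ->
  real_analytic_at x0 (fun x => f x * g x).
Proof.
move=> [c [r [r0 cf]]] [d [s [s0 dg]]].
have min_r : Num.min r s <= r by rewrite ge_min lexx.
have min_s : Num.min r s <= s by rewrite ge_min lexx orbT.
have min0 : 0 < Num.min r s by rewrite lt_min r0 s0.
set rho := Num.min r s / 2.
have rho0 : 0 < rho by rewrite divr_gt0.
have [rho_r rho_s] : rho < r /\ rho < s by rewrite /rho; split; lra.
have [M cM] := pseries_coef_bounded rho0 rho_r (fun t tr => cvgP _ (cf t tr)).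
have [N dN] := pseries_coef_bounded rho0 rho_s (fun t ts => cvgP _ (dg t ts)).
exists (cauchy_prod c d), (rho / 2); split=> [|t t_rho]; first by rewrite divr_gt0.
have t_r : `|t| < r by lra.
have t_s : `|t| < s by lra.
by apply: cvg_pseries_cauchy_prod rho0 _ cM dN (cf t t_r) (dg t t_s); lra.
Qed.

Lemma real_analytic_atB x0 f g : real_analytic_at x0 f -> real_analytic_at x0 g ->
  real_analytic_at x0 (fun x => f x - g x).
Proof.
move=> af ag; have -> : (fun x => f x - g x) = fun x => f x + (-1) * g x.
  by apply/funext => x; rewrite mulN1r.
apply: real_analytic_atD af _; exact: real_analytic_atM (real_analytic_at_cst x0 (-1)) ag.
Qed.


Lemma sum_geom_le (q : R) m n : 0 <= q -> 2 * q <= 1 ->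
  \sum_(m <= k < n) q ^+ k <= 2 * q ^+ m.
Proof.
move=> q0 q2; have [mn|nm] := leqP m n; last first.
  by rewrite big_geq ?mulr_ge0 ?exprn_ge0 // ltnW.
have tele j : (1 - q) * \sum_(m <= k < m + j) q ^+ k = q ^+ m - q ^+ (m + j).
  elim: j => [|j IH]; first by rewrite addn0 big_geq // mulr0 subrr.
  by rewrite addnS big_nat_recr ?leq_addr //= mulrDr IH exprS; ring.
rewrite -(subnKC mn); have := tele (n - m)%N.
have S0 : 0 <= \sum_(m <= k < m + (n - m)) q ^+ k by apply: sumr_ge0 => k _; exact: exprn_ge0.
have b0 : 0 <= q ^+ (m + (n - m)) by exact: exprn_ge0.
move: S0 b0; set S := \sum_(_ <= _ < _) _; set b := q ^+ (m + _); set a := q ^+ m.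
by move=> S0 b0 Sab; nra.
Qed.

Lemma pseries_lead_term_le c rho M (v : R) t K : 0 < rho -> 2 * `|t| <= rho ->
  (forall k, `|c k| * rho ^+ k <= M) -> (forall k, (k < K)%N -> c k = 0) ->
  pseries c t @ \oo --> v -> `|v - c K * t ^+ K| <= 2 * M * (`|t| / rho) ^+ K.+1.
Proof.
move=> rho0 t_rho cM c_lt_K cv.
set q := `|t| / rho; have q0 : 0 <= q by rewrite divr_ge0 // ltW.
have q2 : 2 * q <= 1 by rewrite mulrA ler_pdivrMr // mul1r.
apply: (ler_cvg_to (cvg_norm (cvgB cv (cvg_cst (c K * t ^+ K)))) (cvg_cst _)).
near=> N; have KN : (K < N)%N by near: N; exists K.+1.
change (`|pseries c t N - c K * t ^+ K| <= 2 * M * q ^+ K.+1).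
rewrite pseriesE (big_cat_nat (leq0n K) (ltnW KN)) (big_ltn KN) /=.
rewrite big_nat_cond big1 ?add0r => [|k /andP[/andP[_ /c_lt_K ->] _]]; last exact: mul0r.
rewrite addrAC subrr add0r; apply: le_trans (ler_norm_sum _ _ _) _.
apply: (@le_trans _ _ (\sum_(K.+1 <= k < N) M * q ^+ k)).
  by apply: ler_sum_nat => k _; exact: pseries_term_le.
by rewrite -mulr_sumr (mulrC 2 M) -mulrA ler_wpM2l ?(coef_bound_ge0 cM) ?sum_geom_le.
Unshelve. all: by end_near.
Qed.

Lemma pseries_lim_neq0_near c r (h : R -> R) : 0 < r ->
  (forall t, `|t| < r -> pseries c t @ \oo --> h t) -> (exists k, c k != 0) ->
  exists2 e, 0 < e & forall t, 0 < `|t| < e -> h t != 0.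
Proof.
move=> r0 ch c_neq0; case: (ex_minnP c_neq0) => K cK K_min.
have c_lt_K k : (k < K)%N -> c k = 0.
  by move=> kK; apply/eqP; apply: contraTT kK => /K_min; rewrite leqNgt.
set rho := r / 2; have rho0 : 0 < rho by rewrite divr_gt0.
have rho_r : rho < r by rewrite /rho; lra.
have [M cM] := pseries_coef_bounded rho0 rho_r (fun t tr => cvgP _ (ch t tr)).
have M0 := coef_bound_ge0 cM; have cK0 : 0 < `|c K| by rewrite normr_gt0.
(* near 0, the leading term c_K t^K dominates the rest of the series *)
exists (Num.min (rho / 2) (`|c K| * rho ^+ K.+1 / (2 * M + 1))).
  by rewrite lt_min !divr_gt0 ?mulr_gt0 ?exprn_gt0 //; lra.
move=> t /andP[t0]; rewrite lt_min => /andP[t_rho t_cK]; apply/eqP => ht0.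
have t_rho2 : 2 * `|t| <= rho by lra.
have t_r : `|t| < r by lra.
have := pseries_lead_term_le rho0 t_rho2 cM c_lt_K (ch t t_r).
rewrite ht0 add0r normrN normrM normrX expr_div_n mulrA.
rewrite ler_pdivlMr ?exprn_gt0 // [`|t| ^+ K.+1]exprS.
rewrite ltr_pdivlMr in t_cK; last by lra.
have tK0 : 0 < `|t| ^+ K by rewrite exprn_gt0.
move: t_cK tK0 t0; set a := `|c K|; set P := rho ^+ K.+1; set T := `|t| ^+ K.
by move=> *; nra.
Qed.

Lemma real_analytic_at_eq0_near x0 g : real_analytic_at x0 g ->
  limit_point [set x | g x = 0] x0 -> \forall x \near x0, g x = 0.
Proof.
move=> [c [r [r0 cg]]] g0_acc.
have [c0|/existsNP[k /eqP ck]] := pselect (forall k, c k = 0).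
  apply/nbhs_ballP; exists r => // x /= x0x.
  have := cg (x - x0); rewrite (addrC x0) subrK distrC => /(_ x0x).
  have -> : pseries c (x - x0) = fun=> 0.
    by apply/funext => N; rewrite pseriesE big1 // => k' _; rewrite c0 mul0r.
  by move=> /(cvg_unique _ (cvg_cst 0)) ->.
have [e e0 g_neq0] := pseries_lim_neq0_near r0 cg (ex_intro _ k ck).
have [y [y_x0 gy0 x0y]] := g0_acc _ (nbhsx_ballx _ _ e0); exfalso.
have : 0 < `|y - x0| < e by rewrite normr_gt0 subr_eq0 y_x0 distrC.
by move=> /g_neq0; rewrite (addrC x0) subrK gy0 eqxx.
Qed.

Lemma real_analytic_eq0_interval (U : set R) g x0 : open U -> is_interval U ->
  (forall x, U x -> real_analytic_at x g) -> U x0 ->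
  limit_point [set x | g x = 0] x0 -> forall x, U x -> g x = 0.
Proof.
move=> oU iU ag Ux0 g0_acc.
(* the points near which g vanishes form a nonempty set, open and closed in U *)
pose S := [set x | U x /\ \forall y \near x, g y = 0].
have SU : S = U.
  apply: ((connected_intervalP U).2 iU S).
  - by exists x0; split=> //; exact: real_analytic_at_eq0_near (ag _ Ux0) g0_acc.
  - exists S; last by apply/seteqP; split=> [x Sx|x []] //; split=> //; case: Sx.
    rewrite openE => x [Ux gx0]; rewrite /interior.
    near=> y; split; first by near: y; exact: open_nbhs_nbhs.
    by near: y; exact: nbhs_interior.
  - exists (closure S); first exact: closed_closure.
    apply/seteqP; split=> [x Sx|x [Ux clSx]]; first by split; [case: Sx | exact: subset_closure].
    split=> //; have [//|not_near0] := pselect (\forall y \near x, g y = 0).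
    apply: real_analytic_at_eq0_near (ag _ Ux) _ => V Vx.
    have [y [[_ gy0] Vy]] := clSx V Vx.
    exists y; split=> //; last exact: nbhs_singleton.
    by apply/eqP => yx; apply: not_near0; rewrite -yx.
by move=> x; rewrite -SU => -[_ /nbhs_singleton].
Unshelve. all: by end_near.
Qed.

End PowerSeries.

Section ComplexValued.
Variable R : realType.
Local Notation C := R[i].
Implicit Types (f g : R -> C).

Definition analytic_at (x0 : R) f :=
  real_analytic_at x0 (fun x => complex.Re (f x)) /\
  real_analytic_at x0 (fun x => complex.Im (f x)).

Lemma analytic_at_cst x0 v : analytic_at x0 (fun=> v).
Proof. by split; exact: real_analytic_at_cst. Qed.

Lemma analytic_atD x0 f g : analytic_at x0 f -> analytic_at x0 g ->
  analytic_at x0 (fun x => f x + g x).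
Proof.
by move=> [f1 f2] [g1 g2]; split; under eq_fun do rewrite raddfD; exact: real_analytic_atD.
Qed.

Lemma analytic_atM x0 f g : analytic_at x0 f -> analytic_at x0 g ->
  analytic_at x0 (fun x => f x * g x).
Proof.
move=> [f1 f2] [g1 g2]; split.
  have -> : (fun x => complex.Re (f x * g x)) = fun x =>
      complex.Re (f x) * complex.Re (g x) - complex.Im (f x) * complex.Im (g x).
    by apply/funext => x; case: (f x) (g x) => [a b] [c d].
  by apply: real_analytic_atB; exact: real_analytic_atM.
have -> : (fun x => complex.Im (f x * g x)) = fun x =>
    complex.Re (f x) * complex.Im (g x) + complex.Im (f x) * complex.Re (g x).
  by apply/funext => x; case: (f x) (g x) => [a b] [c d].
by apply: real_analytic_atD; exact: real_analytic_atM.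
Qed.

Lemma analytic_at_conj x0 f : analytic_at x0 f -> analytic_at x0 (fun x => (f x)^*).
Proof.
have ReJ z : complex.Re z^* = complex.Re z by case: z.
have ImJ z : complex.Im z^* = 0 - complex.Im z by case: z => u v /=; rewrite sub0r.
move=> [f1 f2]; split; first by under eq_fun do rewrite ReJ.
by under eq_fun do rewrite ImJ; exact: real_analytic_atB (real_analytic_at_cst _ _) f2.
Qed.

Lemma analytic_at_sum x0 (I : Type) (r : seq I) (Q : pred I) (F : I -> R -> C) :
  (forall i, analytic_at x0 (F i)) -> analytic_at x0 (fun x => \sum_(i <- r | Q i) F i x).
Proof. by apply: sum_closed; [exact: analytic_atD | exact: analytic_at_cst]. Qed.

Lemma analytic_at_det x0 n (A : R -> 'M[C]_n) :
  (forall i j, analytic_at x0 (fun x => A x i j)) -> analytic_at x0 (fun x => \det (A x)).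
Proof. by apply: det_closed; [exact: analytic_atD | exact: analytic_atM | exact: analytic_at_cst]. Qed.

Lemma analytic_at_natmul x0 f k : analytic_at x0 f -> analytic_at x0 (fun x => f x *+ k).
Proof. by apply: natmul_closed; [exact: analytic_atM | exact: analytic_at_cst]. Qed.

Lemma analytic_atN x0 f : analytic_at x0 f -> analytic_at x0 (fun x => - f x).
Proof.
move=> af; have -> : (fun x => - f x) = fun x => -1 * f x by apply/funext => x; rewrite mulN1r.
exact: analytic_atM (analytic_at_cst _ _) af.
Qed.

Definition coef_analytic_at (x0 : R) (p : R -> {poly C}) :=
  forall k, analytic_at x0 (fun x => (p x)`_k).

Lemma coef_analytic_at_cst x0 p : coef_analytic_at x0 (fun=> p).
Proof. by move=> k; exact: analytic_at_cst. Qed.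

Lemma coef_analytic_at_polyC x0 f : analytic_at x0 f ->
  coef_analytic_at x0 (fun x => (f x)%:P).
Proof.
move=> af k; under eq_fun do rewrite coefC.
by case: (k == 0)%N => //; exact: analytic_at_cst.
Qed.

Lemma coef_analytic_atD x0 p q : coef_analytic_at x0 p -> coef_analytic_at x0 q ->
  coef_analytic_at x0 (fun x => p x + q x).
Proof. by move=> ap aq k; under eq_fun do rewrite coefD; exact: analytic_atD. Qed.

Lemma coef_analytic_atM x0 p q : coef_analytic_at x0 p -> coef_analytic_at x0 q ->
  coef_analytic_at x0 (fun x => p x * q x).
Proof.
move=> ap aq k; under eq_fun do rewrite coefM.
by apply: analytic_at_sum => j; exact: analytic_atM.
Qed.

Lemma coef_analytic_at_deriv x0 p : coef_analytic_at x0 p ->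
  coef_analytic_at x0 (fun x => (p x)^`()).
Proof. by move=> ap k; under eq_fun do rewrite coef_deriv; exact: analytic_at_natmul. Qed.

Lemma coef_analytic_at_char_poly x0 n (A : R -> 'M[C]_n) :
  (forall i j, analytic_at x0 (fun x => A x i j)) ->
  coef_analytic_at x0 (fun x => char_poly (A x)).
Proof.
move=> aA; apply: det_closed => [|||i j].
- exact: coef_analytic_atD.
- exact: coef_analytic_atM.
- exact: coef_analytic_at_cst.
under eq_fun do rewrite !mxE -polyCN.
apply: coef_analytic_atD; first exact: coef_analytic_at_cst.
exact/coef_analytic_at_polyC/analytic_atN.
Qed.

(* The size of [Sylvester_mx p q] depends on [size p] and [size q]; this copy has
   a fixed size, so that [p] and [q] can vary with a parameter. *)
Definition Sylvester_mx_of (p q : {poly C}) d1 d2 : 'M[C]_(d1 + d2) :=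
  \matrix_(i, j) match fintype.split i with
                 | inl k => p`_(j - k) *+ (k <= j)
                 | inr k => q`_(j - k) *+ (k <= j) end.

Lemma resultant_Sylvester_mx_of (p q : {poly C}) :
  resultant p q = \det (Sylvester_mx_of p q (size q).-1 (size p).-1).
Proof. by congr (\det _); apply/matrixP => i j; rewrite Sylvester_mxE mxE. Qed.

Lemma analytic_at_resultant x0 (p q : R -> {poly C}) d1 d2 :
  coef_analytic_at x0 p -> coef_analytic_at x0 q ->
  (forall x, (size (q x)).-1 = d1) -> (forall x, (size (p x)).-1 = d2) ->
  analytic_at x0 (fun x => resultant (p x) (q x)).
Proof.
move=> ap aq sq sp.
have -> : (fun x => resultant (p x) (q x)) = fun x => \det (Sylvester_mx_of (p x) (q x) d1 d2).
  by apply/funext => x; rewrite resultant_Sylvester_mx_of sq sp.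
apply: analytic_at_det => i j; under eq_fun do rewrite mxE.
by case: (fintype.split i) => k; apply: analytic_at_natmul.
Qed.

Lemma analytic_on_analytic_at (U : set R) (f : R -> C) x0 :
  analytic_on U f -> U x0 -> analytic_at x0 f.
Proof.
move=> af Ux0; have [a [r [r0 a_cvg]]] := af x0 Ux0.
have proj_analytic (pi : {additive C -> R}) :
    (forall z y, pi (z * (y%:C)%C) = pi z * y) -> (forall z, `|pi z| <= Normc.normc z) ->
    real_analytic_at x0 (fun x => pi (f x)).
  move=> piM pi_le; exists (fun k => pi (a k)), r; split=> // t tr; apply/subr_cvg0.
  have := a_cvg (x0 + t); rewrite addrAC subrr add0r => /(_ tr); apply: cvg0_le_norm => N.
  rewrite -normrN opprB pseriesE big_mkord.
  under eq_bigr do rewrite -piM (rmorphXn (real_complex R)).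
  by rewrite -raddf_sum -raddfB.
split; apply: proj_analytic => -[u v] //=.
- by move=> y; rewrite mulr0 subr0.
- by rewrite -sqrtr_sqr ler_wsqrtr // lerDl sqr_ge0.
- by move=> y; rewrite mulr0 add0r.
- by rewrite -sqrtr_sqr ler_wsqrtr // lerDr sqr_ge0.
Qed.

Lemma real_analytic_at_sqr_normc x0 f : analytic_at x0 f ->
  real_analytic_at x0 (fun x => Normc.normc (f x) ^+ 2).
Proof.
move=> [f1 f2]; have -> : (fun x => Normc.normc (f x) ^+ 2) = fun x =>
    complex.Re (f x) * complex.Re (f x) + complex.Im (f x) * complex.Im (f x).
  by apply/funext => x; case: (f x) => u v /=; rewrite sqr_sqrtr ?addr_ge0 ?sqr_ge0 // !expr2.
by apply: real_analytic_atD; exact: real_analytic_atM.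
Qed.

Lemma analytic_at_adjmx_mul x0 m n (A : R -> 'M[C]_(m, n)) :
  (forall i j, analytic_at x0 (fun x => A x i j)) ->
  forall i j, analytic_at x0 (fun x => (adjmx (A x) *m A x) i j).
Proof.
move=> aA i j; under eq_fun do rewrite mxE.
apply: analytic_at_sum => k; under eq_fun do rewrite !mxE.
by apply: analytic_atM; [apply: analytic_at_conj|]; exact: aA.
Qed.

Lemma analytic_at_resultant_char_poly x0 n (A : R -> 'M[C]_n) :
  (forall i j, analytic_at x0 (fun x => A x i j)) ->
  analytic_at x0 (fun x => resultant (char_poly (A x)) (char_poly (A x))^`()).
Proof.
move=> aA; have aP := coef_analytic_at_char_poly aA.
apply: (analytic_at_resultant (d1 := n.-1) (d2 := n)) => // [|x|x].
- exact: coef_analytic_at_deriv.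
- by rewrite size_deriv_monic ?char_poly_monic // size_char_poly.
- by rewrite size_char_poly.
Qed.

End ComplexValued.

Lemma open_ereal_itv (R : realType) (a b : \bar R) :
  open [set x : R | (a < x%:E)%E /\ (x%:E < b)%E].
Proof. exact: (openI (@open_ereal_gt R a) (@open_ereal_lt R b)). Qed.

Lemma is_interval_ereal_itv (R : realType) (a b : \bar R) :
  is_interval [set x : R | (a < x%:E)%E /\ (x%:E < b)%E].
Proof.
move=> x y [ax _] [_ yb] z /andP[xz zy]; split.
  by apply: lt_le_trans ax _; rewrite lee_fin.
by apply: le_lt_trans yb; rewrite lee_fin.
Qed.

Lemma sqr_normc_eq0 (R : rcfType) (z : R[i]) : Normc.normc z ^+ 2 = 0 <-> z = 0.
Proof.
split=> [/eqP|->]; last by rewrite Normc.normc0 expr0n.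
by rewrite expf_eq0 /= => /eqP/Normc.eq0_normc.
Qed.

Theorem theorem3p8 (R : realType) (m n : nat) (a b : \bar R)
  (F : R -> 'M[R[i]]_(m, n)) :
  (n <= m)%N ->
  let U := [set x : R | (a < x%:E)%E /\ (x%:E < b)%E] in
  (forall i j, analytic_on U (fun x => F x i j)) ->
  let Y := [set x | U x /\ repeated_singular_values (F x)] in
  Y = U \/ (forall x, U x -> ~ limit_point Y x).
Proof.
move=> _ U aF Y.
pose p x := char_poly (adjmx (F x) *m F x).
pose g x := Normc.normc (resultant (p x) (p x)^`()) ^+ 2.
have YE : Y = [set x | U x /\ g x = 0].
  apply/seteqP; split=> x [Ux Yx]; split=> //.
    exact/sqr_normc_eq0/repeated_singular_valuesE.
  exact/repeated_singular_valuesE/sqr_normc_eq0.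
have g_analytic x : U x -> real_analytic_at x g.
  move=> Ux; apply/real_analytic_at_sqr_normc/analytic_at_resultant_char_poly.
  by apply: analytic_at_adjmx_mul => i j; exact: analytic_on_analytic_at (aF i j) Ux.
have [[x0 Ux0 Y_x0]|no_acc] := pselect (exists2 x0, U x0 & limit_point Y x0).
  have g0_acc : limit_point [set x | g x = 0] x0.
    by move=> V /Y_x0[y [yx0 Yy Vy]]; exists y; split=> //; move: Yy; rewrite YE => -[].
  left; apply/seteqP; split=> [x []//|x Ux]; rewrite YE; split=> //.
  exact: (real_analytic_eq0_interval (@open_ereal_itv R a b) (@is_interval_ereal_itv R a b)
    g_analytic Ux0 g0_acc Ux).
by right=> x Ux Y_x; apply: no_acc; exists x.
Qed.
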